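(* For every integer $n\ge 0$, \[ \sum_{k=0}^{n}(-4)^k\frac{\binom{n}{k}}{\binom{1+2k}{k}}\,k^2H_{1+2k} =\frac{2n(4n-1)\{2H_{1+2n}-H_n\}}{(4n^2-1)(2n-3)(2n-5)} -\frac{2n(32n^6+160n^5-544n^4-560n^3+1482n^2-382n-17)}{(4n^2-1)^2(2n-3)^2(2n-5)^2}. \]
   Context: For an integer $m\ge 0$, $H_m$ denotes the $m$-th harmonic number: $H_0=0$ and $H_m=\sum_{j=1}^m \frac1j$ for $m\ge1$. $\binom{n}{k}$ is the usual binomial coefficient. *)

From HB Require Import structures.
From mathcomp Require Import all_boot all_order all_algebra.
Set Implicit Arguments. Unset Strict Implicit. Unset Printing Implicit Defensive.
Import Order.TTheory GRing.Theory Num.Theory.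
Local Open Scope ring_scope.

Definition harm (m : nat) : rat := \sum_(1 <= j < m.+1) (j%:R)^-1.

(* Write S(n) for the sum and w(n,k) for its weight (-4)^k C(n,k) / C(2k+1,k).
   Creative telescoping (Zeilberger's algorithm) produces the first-order
   recurrence
     n(4n-1)(2n+3) S(n+1) - (n+1)(4n+3)(2n-5) S(n) = -G(n,0),
   with certificate
     G(n,k) = w(n+1,k) [k(2k+1) q(n,k) H_{2k+1} + p(n,k) / ((k+1) d(n))]
   for explicit polynomials q, p, d (cert_quad, cert_numer, cert_denom): the
   summand of S(n+1) and of S(n), combined with these coefficients, is
   G(n,k+1) - G(n,k).  Since w(n,k) has rational ratios in both n and k and
   H_{2k+3} - H_{2k+1} = 1/(2k+2) + 1/(2k+3), this reduces to a rational
   function identity.  The closed form satisfies the same recurrence (another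
   rational identity) and agrees with S at n = 0 and n = 1; the leading
   coefficient n(4n-1)(2n+3) vanishes only at n = 0, so induction from n = 1
   concludes. *)

From HB Require Import structures.
From mathcomp Require Import all_boot all_order all_algebra.
From mathcomp Require Import ring lra zify.
Import Order.TTheory GRing.Theory Num.Theory.
Local Open Scope ring_scope.

Lemma natr_mul_sub_neq0 (R : numDomainType) (a n b : nat) :
  (a * n != b)%N -> a%:R * n%:R - b%:R != 0 :> R.
Proof. by rewrite subr_eq0 -natrM eqr_nat. Qed.

Lemma harmS m : harm m.+1 = harm m + (m%:R + 1)^-1.
Proof. by rewrite /harm big_nat_recr //= natr1. Qed.

Lemma harm_odd_succ k :
  harm (1 + 2 * k.+1) = harm (1 + 2 * k) + (2 * k%:R + 2)^-1 + (2 * k%:R + 3)^-1.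
Proof.
have -> : (1 + 2 * k.+1 = (1 + 2 * k).+2)%N by lia.
rewrite !harmS; congr (_ + _^-1 + _^-1).
  by rewrite natrD natrM; ring.
by rewrite -natr1 natrD natrM; ring.
Qed.

Lemma natr_mul_bin_left (R : pzRingType) (m k : nat) :
  'C(m, k.+1)%:R * k.+1%:R = 'C(m, k)%:R * (m%:R - k%:R) :> R.
Proof.
have [le_km | lt_mk] := leqP k m.
  by rewrite -natrB // -!natrM mulnC mul_bin_left [in RHS]mulnC.
by rewrite !bin_small ?mul0r // ltnW.
Qed.

Lemma natr_mul_bin_down (R : pzRingType) (m k : nat) :
  'C(m, k)%:R * m.+1%:R = 'C(m.+1, k)%:R * (m.+1%:R - k%:R) :> R.
Proof.
have [le_km | lt_mk] := leqP k m.+1.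
  by rewrite -natrB // -!natrM mulnC [in RHS]mulnC -mul_bin_down.
by rewrite !bin_small ?mul0r // ltnW.
Qed.

Lemma mul_bin_odd_succ k :
  ('C((2 * k).+3, k.+1) * (k.+1 * k.+2) = 'C((2 * k).+1, k) * ((2 * k).+3 * (2 * k).+2))%N.
Proof.
have up := mul_bin_diag (2 * k).+3 k; have down := mul_bin_down (2 * k).+2 k.
rewrite /= (_ : (2 * k).+2 - k = k.+2)%N in down; last by lia.
by rewrite mulnA (mulnC _ k.+1) -up mulnAC -mulnA -down mulnA mulnC.
Qed.

Definition weight (n k : nat) : rat := (-4) ^+ k * ('C(n, k)%:R / 'C(1 + 2 * k, k)%:R).

Lemma natr_bin_odd_neq0 (R : numDomainType) k : 'C(1 + 2 * k, k)%:R != 0 :> R.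
Proof. by rewrite pnatr_eq0 -lt0n bin_gt0; lia. Qed.

Lemma weight0 n : weight n 0 = 1.
Proof. by rewrite /weight expr0 !bin0 divrr ?mulr1 // unitfE oner_eq0. Qed.

Lemma weight_small n k : (n < k)%N -> weight n k = 0.
Proof. by move=> lt_nk; rewrite /weight bin_small // mul0r mulr0. Qed.

Lemma weightSr m k : weight m k.+1 =
  weight m k * (-2 * (m%:R - k%:R) * (k%:R + 2)) / ((k%:R + 1) * (2 * k%:R + 3)).
Proof.
have e1 : 'C(m, k.+1)%:R = 'C(m, k)%:R * (m%:R - k%:R) / k.+1%:R :> rat.
  by rewrite -natr_mul_bin_left mulfK ?pnatr_eq0.
have e2 : 'C(1 + 2 * k.+1, k.+1)%:R
    = 'C(1 + 2 * k, k)%:R * ((2 * k).+3 * (2 * k).+2)%:R / (k.+1 * k.+2)%:R :> rat.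
  rewrite -natrM (_ : 1 + 2 * k.+1 = (2 * k).+3)%N; last by lia.
  by rewrite add1n -mul_bin_odd_succ natrM mulfK // pnatr_eq0.
rewrite /weight exprS e1 e2 !natrM -!natr1 !natrM.
have k0 : 0 <= k%:R :> rat by exact: ler0n.
by field; rewrite natr_bin_odd_neq0 !gt_eqF //=; lra.
Qed.

Lemma weightSl n k : weight n k = weight n.+1 k * (n%:R + 1 - k%:R) / (n%:R + 1).
Proof.
have e : 'C(n, k)%:R = 'C(n.+1, k)%:R * (n.+1%:R - k%:R) / n.+1%:R :> rat.
  by rewrite -natr_mul_bin_down mulfK // pnatr_eq0.
rewrite /weight e -natr1.
have n0 : 0 <= n%:R :> rat by exact: ler0n.
by field; rewrite natr_bin_odd_neq0 gt_eqF //=; lra.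
Qed.

Section RationalIdentities.

Context {R : realFieldType}.
Implicit Types N K h : R.

Definition rec_lead N := N * (4 * N - 1) * (2 * N + 3).
Definition rec_tail N := (N + 1) * (4 * N + 3) * (2 * N - 5).

Definition cert_denom N :=
  (N + 1) * (2 * N - 5) * (2 * N - 3) * (2 * N - 1) * (2 * N + 1) * (2 * N + 3).

Definition cert_quad N K := - 4 * (N + 1) + (8 * N + 7) * K - (4 * N + 3) * K ^+ 2.

Definition cert_numer N K :=
    (612 * N + 904 * N ^+ 2 - 1196 * N ^+ 3 - 2816 * N ^+ 4 - 1424 * N ^+ 5
       - 32 * N ^+ 6 + 64 * N ^+ 7)
  + (- 462 - 974 * N + 1214 * N ^+ 2 + 3458 * N ^+ 3 + 1596 * N ^+ 4
       - 24 * N ^+ 5 + 304 * N ^+ 6 + 192 * N ^+ 7) * K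
  + (- 195 - 2596 * N - 2607 * N ^+ 2 + 5550 * N ^+ 3 + 10356 * N ^+ 4
       + 5016 * N ^+ 5 + 96 * N ^+ 6 - 320 * N ^+ 7) * K ^+ 2
  + (750 + 2369 * N + 31 * N ^+ 2 - 6684 * N ^+ 3 - 8392 * N ^+ 4
       - 4208 * N ^+ 5 - 1104 * N ^+ 6 - 192 * N ^+ 7) * K ^+ 3
  + (15 - 77 * N - 316 * N ^+ 2 - 16 * N ^+ 3 + 800 * N ^+ 4
       + 1232 * N ^+ 5 + 896 * N ^+ 6 + 256 * N ^+ 7) * K ^+ 4
  + (- 108 - 252 * N + 336 * N ^+ 2 + 1120 * N ^+ 3 + 448 * N ^+ 4
       - 448 * N ^+ 5 - 256 * N ^+ 6) * K ^+ 5.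

Definition cert N K h :=
  K * (2 * K + 1) * cert_quad N K * h + cert_numer N K / ((K + 1) * cert_denom N).

Lemma cert_telescope N K h : cert_denom N != 0 -> 0 <= K ->
  rec_lead N * (K ^+ 2 * h) - rec_tail N * ((N + 1 - K) / (N + 1) * K ^+ 2 * h)
  = -2 * (N + 1 - K) * (K + 2) / ((K + 1) * (2 * K + 3))
      * cert N (K + 1) (h + (2 * K + 2)^-1 + (2 * K + 3)^-1)
    - cert N K h.
Proof.
rewrite {1}/cert_denom !mulf_eq0.
move=> /norP[/norP[/norP[/norP[/norP[hp1 hm5] hm3] hm1] hp1'] hp3] K0.
rewrite /cert /rec_lead /rec_tail /cert_quad /cert_numer /cert_denom.
by field; rewrite hp1 hm5 hm3 hm1 hp1' hp3 !gt_eqF //=; lra.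
Qed.

Definition closed_form N h1 hn :=
  2 * N * (4 * N - 1) * (2 * h1 - hn) / ((4 * N ^+ 2 - 1) * (2 * N - 3) * (2 * N - 5))
  - 2 * N * (32 * N ^+ 6 + 160 * N ^+ 5 - 544 * N ^+ 4 - 560 * N ^+ 3
             + 1482 * N ^+ 2 - 382 * N - 17)
    / ((4 * N ^+ 2 - 1) ^+ 2 * (2 * N - 3) ^+ 2 * (2 * N - 5) ^+ 2).

(* The right-hand side [cert N 0 h] does not depend on [h]. *)
Lemma closed_form_recurrence N h1 hn h : cert_denom N != 0 ->
  rec_lead N * closed_form (N + 1) (h1 + (2 * N + 2)^-1 + (2 * N + 3)^-1) (hn + (N + 1)^-1)
  - rec_tail N * closed_form N h1 hn = - cert N 0 h.
Proof.
rewrite {1}/cert_denom !mulf_eq0.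
move=> /norP[/norP[/norP[/norP[/norP[hp1 hm5] hm3] hm1] hp1'] hp3].
rewrite /closed_form /cert /rec_lead /rec_tail /cert_quad /cert_numer /cert_denom.
have -> : 4 * N ^+ 2 - 1 = (2 * N - 1) * (2 * N + 1) by ring.
have -> : 4 * (N + 1) ^+ 2 - 1 = (2 * N + 1) * (2 * N + 3) by ring.
have -> : 2 * N + 2 = 2 * (N + 1) by ring.
by field; rewrite hp1 hm5 hm3 hm1 hp1' hp3.
Qed.

End RationalIdentities.

Lemma cert_denom_natr_neq0 n : cert_denom (n%:R : rat) != 0.
Proof.
have n0 : 0 <= n%:R :> rat by exact: ler0n.
rewrite /cert_denom !mulf_neq0 ?(natr_mul_sub_neq0 _ 2 n 1) ?natr_mul_sub_neq0 //; try lia.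
all: by rewrite gt_eqF //; lra.
Qed.

Definition summand n k := weight n k * k%:R ^+ 2 * harm (1 + 2 * k).

Definition hsum n := \sum_(0 <= k < n.+1) summand n k.

Definition cert_seq n k := weight n.+1 k * cert n%:R k%:R (harm (1 + 2 * k)).

Lemma summand_telescope n k :
  rec_lead n%:R * summand n.+1 k - rec_tail n%:R * summand n k
  = cert_seq n k.+1 - cert_seq n k.
Proof.
rewrite /summand /cert_seq weightSr (weightSl n k) harm_odd_succ.
rewrite -[n.+1%:R]natr1 -[k.+1%:R]natr1.
set N := n%:R; set K := k%:R; set h := harm _; set w := weight n.+1 k.
transitivity (w * (rec_lead N * (K ^+ 2 * h)
                   - rec_tail N * ((N + 1 - K) / (N + 1) * K ^+ 2 * h))); first by ring.
by rewrite cert_telescope ?cert_denom_natr_neq0 ?ler0n //; ring.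
Qed.

Lemma hsum_recurrence n :
  rec_lead n%:R * hsum n.+1 - rec_tail n%:R * hsum n = - cert n%:R 0 (harm 1).
Proof.
have -> : hsum n = \sum_(0 <= k < n.+2) summand n k.
  by rewrite [RHS]big_nat_recr //= [summand n n.+1]/summand weight_small // !mul0r addr0.
rewrite /hsum !mulr_sumr -sumrB (telescope_sumr_eq (cert_seq n)) //.
  by rewrite /cert_seq weight_small // weight0 mul0r mul1r sub0r mulr0n.
by move=> k _; exact: summand_telescope.
Qed.

Lemma hsum_closed_form n : hsum n = closed_form (n%:R : rat) (harm (1 + 2 * n)) (harm n).
Proof.
elim: n => [|n IH].
  by rewrite /hsum /summand /closed_form /harm !unlock; apply/eqP; vm_compute.
case: n IH => [_|n IH].
  by rewrite /hsum /summand /weight /closed_form /harm !unlock; apply/eqP; vm_compute.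
have lead_neq0 : rec_lead (n.+1%:R : rat) != 0.
  rewrite /rec_lead !mulf_neq0 ?pnatr_eq0 ?(natr_mul_sub_neq0 _ 4 n.+1 1) //; try lia.
  by rewrite gt_eqF // ltr_pwDr // mulr_ge0.
apply: (mulfI lead_neq0); apply: (addIr (- (rec_tail n.+1%:R * hsum n.+1))).
rewrite hsum_recurrence {}IH.
rewrite -(closed_form_recurrence n.+1%:R (harm (1 + 2 * n.+1)) (harm n.+1) (harm 1)
                                 (cert_denom_natr_neq0 n.+1)).
by rewrite -[n.+2%:R]natr1 (harm_odd_succ n.+1) (harmS n.+1).
Qed.

Theorem theorem6 (n : nat) :
  \sum_(0 <= k < n.+1)
     (-4 : rat) ^+ k * ('C(n, k)%:R / 'C(1 + 2 * k, k)%:R) * (k%:R) ^+ 2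
       * harm (1 + 2 * k)
  = (2 * n%:R * (4 * n%:R - 1) * (2 * harm (1 + 2 * n) - harm n))
      / ((4 * n%:R ^+ 2 - 1) * (2 * n%:R - 3) * (2 * n%:R - 5))
    - (2 * n%:R * (32 * n%:R ^+ 6 + 160 * n%:R ^+ 5 - 544 * n%:R ^+ 4
                   - 560 * n%:R ^+ 3 + 1482 * n%:R ^+ 2 - 382 * n%:R - 17))
      / ((4 * n%:R ^+ 2 - 1) ^+ 2 * (2 * n%:R - 3) ^+ 2 * (2 * n%:R - 5) ^+ 2).
Proof. exact: hsum_closed_form. Qed.
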